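(* For every integer $n\geq 6$, $AR(n,P_4\cup P_2)=n+1$, where $P_4\cup P_2$ is the vertex-disjoint union of a path with three edges and a single edge. *)

From mathcomp Require Import all_boot.
Set Implicit Arguments. Unset Strict Implicit. Unset Printing Implicit Defensive.

Definition Kedges (n : nat) : {set {set 'I_n}} := [set e : {set 'I_n} | #|e| == 2].

(* An edge-colouring of K_n is any map col : {set 'I_n} -> nat (only its
   values on edges matter).  Number of colours actually used on the edges: *)
Definition ncolors (n : nat) (col : {set 'I_n} -> nat) : nat :=
  size (undup [seq col e | e <- enum (Kedges n)]).

(* A rainbow copy of the graph H (on vertex set 'I_m, given by its edge list)
   in the colouring col: an injective placement f of the vertices of H into K_n
   such that the images of the edges of H receive pairwise distinct colours. *)
Definition rainbow_copy (n m : nat) (H : seq ('I_m * 'I_m))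
  (col : {set 'I_n} -> nat) : Prop :=
  exists f : 'I_m -> 'I_n,
    injective f /\ uniq [seq col [set f e.1; f e.2] | e <- H].

Definition forces_rainbow (n m : nat) (H : seq ('I_m * 'I_m)) (k : nat) : Prop :=
  forall col : {set 'I_n} -> nat, k <= ncolors col -> rainbow_copy H col.

Definition AR_is (n m : nat) (H : seq ('I_m * 'I_m)) (r : nat) : Prop :=
  forces_rainbow n H r /\ (forall k, k < r -> ~ forces_rainbow n H k).

Definition P4uP2 : seq ('I_6 * 'I_6) :=
  [:: (inord 0, inord 1); (inord 1, inord 2); (inord 2, inord 3);
      (inord 4, inord 5)].

From mathcomp Require Import all_boot.

Set Implicit Arguments. Unset Strict Implicit. Unset Printing Implicit Defensive.

(* Upper bound, by induction on the size of a vertex set S: if S has m + 6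
   vertices and its edges carry at least m + 7 colours, then S contains a
   rainbow P_4 u P_2.
   - Base case m = 0 (K_6 with 7 colours): an exhaustive, computer-checked
     search over all colourings of K_6 up to renaming of colours.
   - Step: call a colour private to v if it occurs inside S only on edges at
     v.  If some v has at most one private colour, delete v and use the
     induction hypothesis.  Otherwise every vertex has two edges of distinct
     private colours (a private pair), and a short case analysis on the
     private pairs of four vertices exhibits a rainbow copy.
   Lower bound: the star colouring of K_n (edges at a centre get distinct
   colours, all other edges colour 0) uses n colours, and every copy of
   P_4 u P_2 has two edges avoiding the centre, both of colour 0. *)

(* The 15 edges {i,j} (i < j) of K_6 on {0,..,5}, in a fixed order; a
   colouring of K_6 is a sequence of 15 colours, the k-th for the k-th edge.
   The order is chosen so that the search below finds rainbow copies early. *)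
Definition K6_edges : seq (nat * nat) :=
  [:: (1, 2); (2, 4); (0, 2); (3, 4); (1, 5); (0, 5); (2, 5); (0, 3); (4, 5);
      (1, 3); (0, 4); (1, 4); (0, 1); (3, 5); (2, 3)].

Definition edge_index (i j : nat) : nat := index (minn i j, maxn i j) K6_edges.

Lemma K6_edgesP i j : i < 6 -> j < 6 -> i != j -> (minn i j, maxn i j) \in K6_edges.
Proof. by case: i => [|[|[|[|[|[|]]]]]] //; case: j => [|[|[|[|[|[|]]]]]]. Qed.

Definition P4uP2_edges : seq (nat * nat) := [:: (0, 1); (1, 2); (2, 3); (4, 5)].

Definition placement_edges (t : seq nat) : seq nat :=
  [seq edge_index (nth 0 t e.1) (nth 0 t e.2) | e <- P4uP2_edges].

(* All placements of P_4 u P_2 in K_6, up to reversing the path or the edge. *)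
Definition placements : seq (seq nat) :=
  [seq t <- permutations (iota 0 6) |
     (nth 0 t 0 < nth 0 t 3) && (nth 0 t 4 < nth 0 t 5)].

(* Edge-index lists of the placements, grouped by their largest edge index:
   the l-th group consists of the copies fully coloured by the first l+1
   colours. *)
Definition placements_by_last : seq (seq (seq nat)) :=
  [seq [seq x <- map placement_edges placements | foldr maxn 0 x == l]
  | l <- iota 0 15].

Definition rainbow_on (s : seq nat) (x : seq nat) : bool :=
  uniq [seq nth 0 s k | k <- x].

(* Exhaustive search over colourings of K_6 in restricted-growth form (the
   colour of edge k is either k itself, a new colour, or a colour j < k that
   was new at edge j).  A prefix p is extended by each admissible colour c and
   closed as soon as a rainbow copy is fully coloured, or if even fresh
   colours on all remaining edges cannot reach 7 colours.  The tests use
   if-then-else rather than || so that evaluation stops at the first success. *)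
Fixpoint search (k : nat) (p : seq nat) : bool :=
  match k with
  | 0 => false
  | k'.+1 =>
    all (fun c => let p' := rcons p c in
          if has (rainbow_on p') (nth [::] placements_by_last (size p))
          then true else if size (undup p') + k' < 7 then true
          else search k' p')
      [seq j <- iota 0 (size p).+1 | (j == size p) || (nth 0 p j == j)]
  end.

Lemma search_succeeds : search 15 [::].
Proof. by vm_compute. Qed.

Lemma mem_placements_by_last l x : l < 15 -> x \in nth [::] placements_by_last l ->
  (exists2 t, t \in placements & x = placement_edges t) /\ all (fun k => k <= l) x.
Proof.
move=> lt_l15; rewrite (nth_map 0) ?size_iota // nth_iota // add0n mem_filter.
case/andP=> /eqP <- /mapP [t t_pl ->]; split; first by exists t.
elim: (placement_edges t) => //= k y IHy; rewrite leq_maxl /=.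
by apply: sub_all IHy => j /leq_trans; apply; rewrite leq_maxr.
Qed.

Lemma placements_valid :
  all (fun t => [&& size t == 6, uniq t, all (fun v => v < 6) t
                  & all (fun k => k < 15) (placement_edges t)]) placements.
Proof. by vm_compute. Qed.

Lemma rainbow_on_cat p q x :
  all (fun k => k < size p) x -> rainbow_on p x -> rainbow_on (p ++ q) x.
Proof.
move=> x_lt; rewrite /rainbow_on; congr (is_true (uniq _)).
by apply/eq_in_map => k /(allP x_lt) k_lt; rewrite nth_cat k_lt.
Qed.

Lemma size_undup_cat (T : eqType) (p q : seq T) :
  size (undup (p ++ q)) <= size (undup p) + size q.
Proof.
rewrite undup_cat size_cat leq_add ?size_undup //.
by rewrite size_filter count_size.
Qed.

Definition growth_at (r : seq nat) (i : nat) : bool :=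
  let v := nth 0 r i in (v == i) || ((v < i) && (nth 0 r v == v)).

Lemma search_sound k p q : search k p -> size q = k -> size p + k = 15 ->
  (forall i, size p <= i < 15 -> growth_at (p ++ q) i) ->
  (exists2 t, t \in placements & rainbow_on (p ++ q) (placement_edges t))
  \/ size (undup (p ++ q)) < 7.
Proof.
elim: k p q => [//|k IHk] p [//|c q] /= search_p [size_q] size_pk growth.
have lt_p15 : size p < 15 by rewrite -size_pk addnS ltnS leq_addr.
have c_adm : c \in [seq j <- iota 0 (size p).+1 | (j == size p) || (nth 0 p j == j)].
  rewrite mem_filter mem_iota add0n.
  have := growth (size p); rewrite leqnn lt_p15 => /(_ isT).
  rewrite /growth_at nth_cat ltnn subnn /=.
  case/orP=> [/eqP -> | /andP [lt_cp]]; first by rewrite eqxx ltnSn.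
  by rewrite nth_cat lt_cp => ->; rewrite orbT ltnS ltnW.
move: (allP search_p c c_adm); rewrite -cat_rcons.
case: hasP => [[x x_in rb_x] _ | _].
  have [[t t_pl x_eq] x_le] := mem_placements_by_last lt_p15 x_in; subst x.
  left; exists t => //; apply: rainbow_on_cat => //.
  by rewrite size_rcons; apply: sub_all x_le => j; rewrite ltnS.
case: ifP => [few _ | _ search_c].
  by right; apply: leq_ltn_trans (size_undup_cat _ _) _; rewrite size_q.
apply: IHk => //; first by rewrite size_rcons addSnnS.
move=> i /andP [lt_pi lt_i15]; rewrite cat_rcons; apply: growth.
by rewrite lt_i15 andbT ltnW // -(size_rcons p c).
Qed.

Lemma size_undup_map_in (T1 T2 : eqType) (f : T1 -> T2) (s : seq T1) :
  {in s &, injective f} -> size (undup (map f s)) = size (undup s).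
Proof.
move=> f_inj; rewrite -(size_map f (undup s)); apply: perm_size.
apply: uniq_perm; rewrite ?undup_uniq //.
  by rewrite map_inj_in_uniq ?undup_uniq // => x y; rewrite !mem_undup; apply: f_inj.
by move=> y; rewrite mem_undup (eq_mem_map f (mem_undup s)).
Qed.

(* The colouring s is first
   renamed to restricted-growth form (each colour becomes the position of its
   first occurrence), which the search covers. *)
Lemma K6_rainbow (s : seq nat) : size s = 15 -> 7 <= size (undup s) ->
  exists2 t, t \in placements & rainbow_on s (placement_edges t).
Proof.
move=> size_s ge7.
pose r := [seq index x s | x <- s].
have index_inj : {in s &, injective (index^~ s)} := @index_inj _ 0 s.
have size_r : size r = 15 by rewrite size_map.
have growth i : size (Nil nat) <= i < 15 -> growth_at ([::] ++ r) i.
  case/andP=> _ lt_i; rewrite -size_s in lt_i.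
  rewrite /growth_at /= /r (nth_map 0) // (nth_map 0) ?index_mem ?mem_nth //.
  by rewrite nth_index ?mem_nth // eqxx andbT -leq_eqVlt index_nth.
have [[t t_pl rb_t] | few] := search_sound search_succeeds size_r erefl growth.
  exists t => //; move: rb_t; rewrite /rainbow_on /r.
  have /allP /(_ t t_pl) /and4P [_ _ _] := placements_valid.
  move: (placement_edges t) => x /allP x_lt.
  have -> : [seq nth 0 r k | k <- x] = [seq index y s | y <- [seq nth 0 s k | k <- x]].
    by rewrite -map_comp; apply/eq_in_map => k /x_lt k_lt /=; rewrite (nth_map 0) ?size_s.
  rewrite map_inj_in_uniq // => _ _ /mapP [k /x_lt k_lt ->] /mapP [j /x_lt j_lt ->].
  by apply: index_inj; rewrite mem_nth ?size_s.
by move: few; rewrite cat0s size_undup_map_in // ltnNge ge7.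
Qed.

Lemma exists_outside (T : eqType) (s l : seq T) :
  uniq s -> size l < size s -> exists2 x, x \in s & x \notin l.
Proof.
move=> s_uniq lt_ls; apply/hasP; apply: contraTT lt_ls => /hasPn s_l.
by rewrite -leqNgt uniq_leq_size // => x /s_l /negbNE.
Qed.

Section ColouringOfKn.

Variables (n : nat) (col : {set 'I_n} -> nat).

Definition colours_in (S : {set 'I_n}) : seq nat :=
  [seq col e | e <- filter (fun e : {set 'I_n} => e \subset S) (enum (Kedges n))].

Definition rainbow_in (S : {set 'I_n}) : Prop :=
  exists f : 'I_6 -> 'I_n, [/\ injective f, forall i, f i \in S &
    uniq [seq col [set f e.1; f e.2] | e <- P4uP2]].

Lemma edge_in_Kedges (x y : 'I_n) : x != y -> [set x; y] \in Kedges n.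
Proof. by move=> neq_xy; rewrite inE cards2 neq_xy. Qed.

Lemma mem_colours_in (S e : {set 'I_n}) :
  e \in Kedges n -> e \subset S -> col e \in colours_in S.
Proof. by move=> e_edge e_S; apply: map_f; rewrite mem_filter e_S mem_enum. Qed.

Lemma colours_inP (S : {set 'I_n}) c : c \in colours_in S ->
  exists x y, [/\ x \in S, y \in S, x != y & col [set x; y] = c].
Proof.
case/mapP=> e; rewrite mem_filter mem_enum inE.
case/andP=> e_S /cards2P [x [y [neq_xy e_xy]]] ->.
by exists x, y; move: e_S; rewrite e_xy subUset !sub1set => /andP [x_S y_S].
Qed.

Lemma rainbow_in_subset (S S' : {set 'I_n}) :
  S' \subset S -> rainbow_in S' -> rainbow_in S.
Proof.
by move=> sub_S'S [f [f_inj f_S' f_rb]]; exists f; split=> // i; apply: (subsetP sub_S'S).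
Qed.

Lemma rainbow_in_of_vertices (S : {set 'I_n}) (p0 p1 p2 p3 p4 p5 : 'I_n) :
  uniq [:: p0; p1; p2; p3; p4; p5] -> all (mem S) [:: p0; p1; p2; p3; p4; p5] ->
  uniq [:: col [set p0; p1]; col [set p1; p2]; col [set p2; p3]; col [set p4; p5]] ->
  rainbow_in S.
Proof.
move=> p_uniq p_S col_uniq; pose ps := [:: p0; p1; p2; p3; p4; p5].
exists (fun i : 'I_6 => nth p0 ps i); split.
- by move=> i j /eqP; rewrite nth_uniq // => /eqP; apply: val_inj.
- by move=> i; apply: (allP p_S); rewrite mem_nth.
- by rewrite /P4uP2 /= !inordK.
Qed.

Definition induced_K6 (v0 : 'I_n) (vs : seq 'I_n) : seq nat :=
  [seq col [set nth v0 vs e.1; nth v0 vs e.2] | e <- K6_edges].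

Lemma nth_induced_K6 v0 vs i j : i < 6 -> j < 6 -> i != j ->
  nth 0 (induced_K6 v0 vs) (edge_index i j) = col [set nth v0 vs i; nth v0 vs j].
Proof.
move=> lt_i lt_j neq_ij; have ij_edge := K6_edgesP lt_i lt_j neq_ij.
rewrite (nth_map (0, 0)); last by rewrite index_mem.
by rewrite nth_index //; case: leqP => _ //=; rewrite setUC.
Qed.

Lemma colours_in_induced_K6 (S : {set 'I_n}) v0 vs : size vs = 6 ->
  S =i vs -> {subset colours_in S <= induced_K6 v0 vs}.
Proof.
move=> size_vs S_vs c /colours_inP [x [y [x_S y_S neq_xy <-]]].
rewrite S_vs in x_S; rewrite S_vs in y_S.
have lt_x : index x vs < 6 by rewrite -size_vs index_mem.
have lt_y : index y vs < 6 by rewrite -size_vs index_mem.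
have neq_ixy : index x vs != index y vs.
  by apply: contra neq_xy => /eqP/(congr1 (nth v0 vs)); rewrite !nth_index // => ->.
rewrite -(nth_index v0 x_S) -(nth_index v0 y_S) -nth_induced_K6 //.
by apply: mem_nth; rewrite size_map index_mem K6_edgesP.
Qed.

Lemma rainbow_in_of_placement (S : {set 'I_n}) v0 vs t : uniq vs -> size vs = 6 ->
  all (mem S) vs -> t \in placements ->
  rainbow_on (induced_K6 v0 vs) (placement_edges t) -> rainbow_in S.
Proof.
move=> vs_uniq size_vs vs_S t_pl.
have /allP /(_ t t_pl) /and4P [/eqP size_t t_uniq t_lt6 _] := placements_valid.
have t_lt i : i < 6 -> nth 0 t i < 6.
  by move=> lt_i; apply: (allP t_lt6); rewrite mem_nth ?size_t.
pose f (i : 'I_6) := nth v0 vs (nth 0 t i).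
have P4uP2_valid : all (fun e => [&& e.1 < 6, e.2 < 6 & e.1 != e.2]) P4uP2_edges by [].
have P4uP2E : P4uP2 = [seq (inord e.1, inord e.2) | e <- P4uP2_edges] by [].
rewrite /rainbow_on.
have -> : [seq nth 0 (induced_K6 v0 vs) k | k <- placement_edges t] =
          [seq col [set f e.1; f e.2] | e <- P4uP2].
  rewrite P4uP2E -!map_comp; apply/eq_in_map.
  move=> e /(allP P4uP2_valid) /and3P [lt_a lt_b neq_ab] /=.
  by rewrite nth_induced_K6 ?t_lt ?nth_uniq ?size_t // /f !inordK.
move=> rb_t; exists f; split=> //.
- move=> i j /eqP; rewrite /f nth_uniq ?size_vs ?t_lt //.
  by rewrite nth_uniq ?size_t // => /eqP; apply: val_inj.
- by move=> i; apply: (allP vs_S); rewrite mem_nth ?size_vs ?t_lt.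
Qed.

Lemma rainbow_in_six (S : {set 'I_n}) :
  #|S| = 6 -> 7 <= size (undup (colours_in S)) -> rainbow_in S.
Proof.
move=> card_S ge7; have size_vs : size (enum S) = 6 by rewrite -cardE.
have [v0 _] : exists v0 : 'I_n, v0 \in enum S.
  by case: (enum S) size_vs => // v0 vs _; exists v0; rewrite inE eqxx.
have enum_S : S =i enum S by move=> x; rewrite mem_enum.
have ge7' : 7 <= size (undup (induced_K6 v0 (enum S))).
  apply: leq_trans ge7 _; apply: uniq_leq_size; rewrite ?undup_uniq // => c.
  by rewrite !mem_undup; apply: colours_in_induced_K6.
have [t t_pl rb_t] := K6_rainbow (size_map _ K6_edges) ge7'.
apply: rainbow_in_of_placement (enum_uniq _) size_vs _ t_pl rb_t.
by apply/allP => x; rewrite mem_enum.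
Qed.

Definition private_colour (S : {set 'I_n}) (v : 'I_n) (c : nat) : Prop :=
  forall x y, x \in S -> y \in S -> x != y -> x != v -> y != v -> col [set x; y] != c.

Record private_pair (S : {set 'I_n}) (v a b : 'I_n) : Prop := PrivatePair {
  pp_v : v \in S; pp_a : a \in S; pp_b : b \in S; pp_av : a != v; pp_bv : b != v;
  pp_neq : col [set v; a] != col [set v; b];
  pp_private_a : private_colour S v (col [set v; a]);
  pp_private_b : private_colour S v (col [set v; b]) }.

Lemma private_pair_sym (S : {set 'I_n}) (v a b : 'I_n) :
  private_pair S v a b -> private_pair S v b a.
Proof. by case=> *; constructor; rewrite // eq_sym. Qed.

Lemma private_pair_neq (S : {set 'I_n}) (v a b : 'I_n) : private_pair S v a b -> a != b.
Proof. by case=> _ _ _ _ _ neq_col _ _; apply: contraNneq neq_col => ->. Qed.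

Lemma private_pair_uniq (S : {set 'I_n}) (v a b : 'I_n) :
  private_pair S v a b -> uniq [:: v; a; b].
Proof.
move=> pp; have [_ _ _ neq_av neq_bv _ _ _] := pp.
by rewrite /= !inE !negb_or !(eq_sym v) neq_av neq_bv (private_pair_neq pp).
Qed.

Definition private_colours (S : {set 'I_n}) (v : 'I_n) : seq nat :=
  [seq c <- undup (colours_in S) | c \notin colours_in (S :\ v)].

Lemma colours_delete_vertex (S : {set 'I_n}) (v : 'I_n) :
  size (undup (colours_in S)) <=
  size (undup (colours_in (S :\ v))) + size (private_colours S v).
Proof.
rewrite -(count_predC (mem (colours_in (S :\ v)))) /private_colours size_filter.
rewrite leq_add2r -size_filter uniq_leq_size ?filter_uniq ?undup_uniq //.
by move=> c; rewrite mem_filter !mem_undup => /andP [].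
Qed.

Lemma private_colours_witness (S : {set 'I_n}) (v : 'I_n) c :
  v \in S -> c \in private_colours S v ->
  exists a, [/\ a \in S, a != v, col [set v; a] = c & private_colour S v c].
Proof.
move=> v_S; rewrite mem_filter mem_undup => /andP [c_notin c_in].
have c_priv : private_colour S v c.
  move=> x y x_S y_S neq_xy neq_xv neq_yv; apply: contraNneq c_notin => <-.
  rewrite mem_colours_in ?edge_in_Kedges //.
  by rewrite subUset !sub1set !in_setD1 neq_xv neq_yv x_S y_S.
have [x [y [x_S y_S neq_xy col_xy]]] := colours_inP c_in.
have [x_v|neq_xv] := eqVneq x v; first by subst x; exists y; split; rewrite // eq_sym.
have [y_v|neq_yv] := eqVneq y v; first by subst y; exists x; split; rewrite // setUC.
by have := c_priv x y x_S y_S neq_xy neq_xv neq_yv; rewrite col_xy eqxx.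
Qed.

Lemma private_pair_of_colours (S : {set 'I_n}) (v : 'I_n) :
  v \in S -> 1 < size (private_colours S v) -> exists a b, private_pair S v a b.
Proof.
move=> v_S gt1; have c_uniq : uniq (private_colours S v).
  by rewrite filter_uniq ?undup_uniq.
have [a [a_S neq_av col_a priv_a]] := private_colours_witness v_S (mem_nth 0 (ltnW gt1)).
have [b [b_S neq_bv col_b priv_b]] := private_colours_witness v_S (mem_nth 0 gt1).
exists a, b; constructor; rewrite ?col_a ?col_b //.
by rewrite nth_uniq // ltnW.
Qed.

Lemma fresh_vertex (S : {set 'I_n}) (l : seq 'I_n) :
  size l < #|S| -> exists2 x, x \in S & x \notin l.
Proof.
rewrite cardE => /(exists_outside (enum_uniq S)) [x x_S x_l].
by exists x => //; rewrite -mem_enum.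
Qed.

(* If u has the private pair (a, b) and some edge yz avoiding u, a and b has a
   colour private to y, then with a sixth vertex x the path a u b x and the
   edge yz form a rainbow copy. *)
Lemma rainbow_of_disjoint_private (S : {set 'I_n}) (u a b y z : 'I_n) :
  5 < #|S| -> private_pair S u a b -> y \in S -> z \in S -> z != y ->
  private_colour S y (col [set y; z]) ->
  y \notin [:: u; a; b] -> z \notin [:: u; a; b] -> rainbow_in S.
Proof.
move=> ge6 pp_u y_S z_S neq_zy priv_y y_out z_out.
have [x x_S x_out] := fresh_vertex (l := [:: u; a; b; y; z]) ge6.
move: x_out y_out z_out; rewrite !inE !negb_or.
case/and5P=> neq_xu neq_xa neq_xb neq_xy neq_xz.
case/and3P=> neq_yu neq_ya neq_yb; case/and3P=> neq_zu neq_za neq_zb.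
have [u_S a_S b_S neq_au neq_bu _ priv_a priv_b] := pp_u.
have neq_ab := private_pair_neq pp_u.
apply: (@rainbow_in_of_vertices S a u b x y z).
- by rewrite /= !inE !negb_or; repeat (apply/andP; split); rewrite // eq_sym.
- by rewrite /= a_S u_S b_S x_S y_S z_S.
- rewrite /= !inE !negb_or setUC (pp_neq pp_u) /=.
  rewrite !(eq_sym (col [set u; a])) !(eq_sym (col [set u; b])).
  by rewrite !priv_a ?priv_b ?priv_y //; rewrite eq_sym.
Qed.

(* If w2 has the private pair (a2, b2) and the colour of w a2 is private to w,
   then the path w a2 w2 b2 and any disjoint edge w3 t form a rainbow copy. *)
Lemma rainbow_of_shared_private (S : {set 'I_n}) (w a2 w2 b2 w3 t : 'I_n) :
  private_pair S w2 a2 b2 -> w \in S -> private_colour S w (col [set w; a2]) ->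
  w3 \in S -> t \in S -> uniq [:: w; a2; w2; b2; w3; t] -> rainbow_in S.
Proof.
move=> pp_w2 w_S priv_w w3_S t_S vs_uniq.
have [w2_S a2_S b2_S _ _ neq_col priv_a2 priv_b2] := pp_w2.
apply: (@rainbow_in_of_vertices S w a2 w2 b2 w3 t) => //.
  by rewrite /= w_S a2_S w2_S b2_S w3_S t_S.
move: vs_uniq; rewrite /= !inE !negb_or.
case/and5P=> /and5P [? ? ? ? ?] /and4P [? ? ? ?] /and3P [? ? ?] /andP [? ?] /andP [? _].
rewrite [[set a2; w2]]setUC neq_col /= !(eq_sym (col [set w; a2])).
rewrite !(eq_sym (col [set w2; a2])) !(eq_sym (col [set w2; b2])).
by rewrite !priv_w ?priv_a2 ?priv_b2 //; rewrite eq_sym.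
Qed.

Lemma private_pairs_meet (S : {set 'I_n}) (u a b y z z' : 'I_n) :
  5 < #|S| -> private_pair S u a b -> private_pair S y z z' ->
  y \notin [:: u; a; b] -> rainbow_in S \/ z \in [:: u; a; b].
Proof.
move=> ge6 pp_u pp_y y_out; have [z_in | z_out] := boolP (z \in _); first by right.
left; have [y_S z_S _ neq_zy _ _ priv_z _] := pp_y.
exact: rainbow_of_disjoint_private ge6 pp_u y_S z_S neq_zy priv_z y_out z_out.
Qed.

(* Fix u
   with private pair (a, b) and three more vertices w, w2, w3 outside
   T = {u, a, b}.  The private pairs (a1, b1) of w and (a2, b2) of w2 lie in
   T, and a2 also meets {w, a1, b1}, so the colour of w a2 is private to w;
   a vertex t of T other than a2, b2 completes w a2 w2 b2 + w3 t. *)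
Lemma rainbow_of_private_pairs (S : {set 'I_n}) : 5 < #|S| ->
  (forall v, v \in S -> exists a b, private_pair S v a b) -> rainbow_in S.
Proof.
move=> ge6 has_pp.
have [u u_S _] := fresh_vertex (l := [::]) (leq_ltn_trans (isT : 0 <= 5) ge6).
have [a [b pp_u]] := has_pp u u_S; set T := [:: u; a; b].
have [w w_S w_T] := fresh_vertex (l := T) (leq_ltn_trans (isT : 3 <= 5) ge6).
have [w2 w2_S] := fresh_vertex (l := w :: T) (leq_ltn_trans (isT : 4 <= 5) ge6).
rewrite inE negb_or eq_sym => /andP [neq_ww2 w2_T].
have [w3 w3_S] := fresh_vertex (l := w2 :: w :: T) ge6.
rewrite inE negb_or eq_sym => /andP [neq_w2w3].
rewrite inE negb_or eq_sym => /andP [neq_ww3 w3_T].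
have [a1 [b1 pp_w]] := has_pp w w_S; have [a2 [b2 pp_w2]] := has_pp w2 w2_S.
have [//|a1_T] := private_pairs_meet ge6 pp_u pp_w w_T.
have [//|b1_T] := private_pairs_meet ge6 pp_u (private_pair_sym pp_w) w_T.
have [//|a2_T] := private_pairs_meet ge6 pp_u pp_w2 w2_T.
have [//|b2_T] := private_pairs_meet ge6 pp_u (private_pair_sym pp_w2) w2_T.
have out_T x : x \in T -> x \notin [:: w; w2; w3].
  move=> x_T; rewrite !inE !negb_or.
  by rewrite (elimT memPn w_T x x_T) (elimT memPn w2_T x x_T) (elimT memPn w3_T x x_T).
have w2_out : w2 \notin [:: w; a1; b1].
  rewrite !inE !negb_or eq_sym neq_ww2 !(eq_sym w2).
  by rewrite (elimT memPn w2_T a1 a1_T) (elimT memPn w2_T b1 b1_T).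
have [//|a2_pw] := private_pairs_meet ge6 pp_w pp_w2 w2_out.
have priv_w : private_colour S w (col [set w; a2]).
  move: a2_pw; rewrite !inE => /or3P [/eqP a2_w | /eqP -> | /eqP ->].
  - by move: (out_T _ a2_T); rewrite a2_w inE eqxx.
  - exact: pp_private_a pp_w.
  - exact: pp_private_b pp_w.
have [t t_T t_out] := exists_outside (l := [:: a2; b2]) (private_pair_uniq pp_u) isT.
have t_S : t \in S.
  by move: t_T; rewrite !inE => /or3P [] /eqP ->; [| exact: pp_a pp_u | exact: pp_b pp_u].
apply: (rainbow_of_shared_private pp_w2 w_S priv_w w3_S t_S).
have neq_a2b2 := private_pair_neq pp_w2.
move: (out_T _ a2_T) (out_T _ b2_T) (out_T _ t_T) t_out; rewrite !inE !negb_or.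
case/and3P=> ? ? ?; case/and3P=> ? ? ?; case/and3P=> ? ? ?; case/andP=> ? ?.
by rewrite /= !inE !negb_or; repeat (apply/andP; split); rewrite // eq_sym.
Qed.

(* A vertex with at most one private
   colour is deleted; if there is none, every vertex has a private pair. *)
Lemma rainbow_in_large m (S : {set 'I_n}) :
  #|S| = m + 6 -> m + 7 <= size (undup (colours_in S)) -> rainbow_in S.
Proof.
elim: m S => [|m IHm] S card_S many; first exact: rainbow_in_six.
have [/exists_inP [v v_S few] | /exists_inPn no_few] :=
  boolP [exists v in S, size (private_colours S v) <= 1].
  apply: (rainbow_in_subset (subD1set S v)); apply: IHm.
    by move: card_S; rewrite (cardsD1 v S) v_S addSn => [[]].
  rewrite -(leq_add2r 1) addn1 -addSn (leq_trans many) //.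
  by rewrite (leq_trans (colours_delete_vertex S v)) // leq_add2l.
apply: rainbow_of_private_pairs; first by rewrite card_S addnC.
by move=> v v_S; apply: private_pair_of_colours; rewrite // ltnNge no_few.
Qed.

Lemma colours_in_setT :
  colours_in [set: 'I_n] = [seq col e | e <- enum (Kedges n)].
Proof.
by rewrite /colours_in; congr map; apply/all_filterP/allP => e _; apply: subsetT.
Qed.

End ColouringOfKn.

Lemma forces_rainbow_upper n : 6 <= n -> forces_rainbow n P4uP2 n.+1.
Proof.
move=> ge6 col many.
have card_T : #|[set: 'I_n]| = (n - 6) + 6 by rewrite cardsT card_ord subnK.
have [|f [f_inj _ f_rb]] := @rainbow_in_large n col _ _ card_T; last by exists f.
by rewrite colours_in_setT addnS subnK.
Qed.

(* The star colouring of K_{n+1}: the edge {0, x} gets colour x, every edge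
   avoiding the centre 0 gets colour 0. *)
Definition star_colouring n (e : {set 'I_n.+1}) : nat :=
  if ord0 \in e then \sum_(i in e) val i else 0.

Lemma star_colouring_centre n (x : 'I_n.+1) :
  x != ord0 -> star_colouring [set ord0; x] = x.
Proof.
move=> x_neq0; rewrite /star_colouring !inE eqxx big_setU1 ?big_set1 //.
by rewrite inE eq_sym.
Qed.

Lemma star_colouring_off n (x y : 'I_n.+1) :
  x != ord0 -> y != ord0 -> star_colouring [set x; y] = 0.
Proof.
move=> x_neq0 y_neq0.
by rewrite /star_colouring !inE !(eq_sym ord0) (negbTE x_neq0) (negbTE y_neq0).
Qed.

Lemma star_ncolors n : 1 < n -> n.+1 <= ncolors (@star_colouring n).
Proof.
move=> gt1_n.
suff : size (iota 0 n.+1) <= ncolors (@star_colouring n) by rewrite size_iota.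
apply: uniq_leq_size; rewrite ?iota_uniq // => c.
rewrite mem_iota add0n mem_undup => lt_c; apply/mapP.
case: c lt_c => [|c] lt_c.
  pose x1 : 'I_n.+1 := Ordinal (ltnW gt1_n : 1 < n.+1).
  pose x2 : 'I_n.+1 := Ordinal (gt1_n : 2 < n.+1).
  by exists [set x1; x2]; rewrite ?star_colouring_off // mem_enum edge_in_Kedges.
exists [set ord0; Ordinal lt_c]; last by rewrite star_colouring_centre.
by rewrite mem_enum edge_in_Kedges.
Qed.

Lemma P4uP2_two_edges_avoid (j : 'I_6) :
  1 < count (fun e : 'I_6 * 'I_6 => (e.1 != j) && (e.2 != j)) P4uP2.
Proof.
by case: j => [[|[|[|[|[|[|//]]]]]] lt_j]; rewrite /P4uP2 /= -!val_eqE /= !inordK.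
Qed.

(* At most one vertex of a copy is the centre, so at least two of its edges
   avoid the centre and both get colour 0. *)
Lemma star_no_rainbow n : ~ rainbow_copy P4uP2 (@star_colouring n).
Proof.
case=> f [f_inj f_rb].
have [j0 off_j0] : exists j0 : 'I_6, forall i, i != j0 -> f i != ord0.
  case: (pickP (fun i => f i == ord0)) => [j /eqP fj0 | none0].
    by exists j => i; apply: contraNneq => fi0; apply/eqP/f_inj; rewrite fi0.
  by exists ord0 => i _; rewrite none0.
have := count_uniq_mem 0 f_rb; rewrite count_map.
suff : 1 < count (preim (fun e => star_colouring [set f e.1; f e.2]) (pred1 0)) P4uP2.
  by move=> two0 eq_count; move: two0; rewrite eq_count; case: (0 \in _).
apply: leq_trans (P4uP2_two_edges_avoid j0) _.
apply: sub_count => e /andP [e1_off e2_off] /=.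
by rewrite star_colouring_off ?off_j0.
Qed.

Theorem proposition6p3 (n : nat) : 6 <= n -> AR_is n P4uP2 n.+1.
Proof.
move=> ge6; split; first exact: forces_rainbow_upper.
case: n ge6 => [//|n] ge6 k; rewrite ltnS => le_k forces.
have gt1_n : 1 < n by rewrite -ltnS (leq_trans _ ge6).
have := forces _ (leq_trans le_k (star_ncolors gt1_n)).
exact: star_no_rainbow.
Qed.
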